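(* Let $\rho,\sigma,\omega\in\mathcal{S}(\mathbb{C}^2)$ be qubit states each of which is orthogonal to $\sigma_z$ in the Hilbert–Schmidt sense (i.e. $\mathrm{tr}[\rho\sigma_z]=\mathrm{tr}[\sigma\sigma_z]=\mathrm{tr}[\omega\sigma_z]=0$). Then $$d^2_{z,2}(\rho,\sigma)+d^2_{z,2}(\sigma,\omega)\ge d^2_{z,2}(\rho,\omega).$$
   Context: Qubit setting: $\mathcal{H}=\mathbb{C}^2$, $\mathcal{H}^*$ is identified with $\mathbb{C}^2$ via the dual basis, and $A^T$ is the usual matrix transpose; operators on $\mathcal{H}\otimes\mathcal{H}^*$ are $4\times4$ matrices in the basis $e_1\otimes e_1^*,e_1\otimes e_2^*,e_2\otimes e_1^*,e_2\otimes e_2^*$. $\sigma_z=\begin{pmatrix}1&0\\0&-1\end{pmatrix}$. The set of couplings of states $\rho,\omega$ is $\mathcal{C}(\rho,\omega)=\{\Pi\in\mathcal{S}(\mathcal{H}\otimes\mathcal{H}^* ):\mathrm{tr}_{\mathcal{H}^*}[\Pi]=\omega,\ \mathrm{tr}_{\mathcal{H}}[\Pi]=\rho^T\}$. $C_{z,2}=(\sigma_z\otimes I^T-I\otimes\sigma_z^T)^2=\mathrm{diag}(0,4,4,0)$, $D^2_{z,2}(\rho,\omega)=\min_{\Pi\in\mathcal{C}(\rho,\omega)}\mathrm{tr}[\Pi C_{z,2}]$, and $d_{z,2}(\rho,\omega)=\big(D^2_{z,2}(\rho,\omega)-\tfrac12(D^2_{z,2}(\rho,\rho)+D^2_{z,2}(\omega,\omega))\big)^{1/2}$.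 The claim is the triangle inequality for the squared quantity $d^2_{z,2}$. *)

From HB Require Import structures.
From mathcomp Require Import all_boot all_order all_algebra.
From mathcomp Require Import complex mxtens.
From mathcomp Require Import classical_sets reals.
Set Implicit Arguments. Unset Strict Implicit. Unset Printing Implicit Defensive.
Import Order.TTheory GRing.Theory Num.Theory.
Local Open Scope ring_scope.
Local Open Scope complex_scope.

Section Qubit.
Variable R : realType.
Local Notation C := (R[i]).

Definition adjmx {m n} (A : 'M[C]_(m, n)) : 'M[C]_(n, m) := (map_mx (@conjc R) A)^T.

(* positive semidefinite: v^* A v >= 0 for all v (order on C: real and >= 0) *)
Definition psd {n} (A : 'M[C]_n) : Prop :=
  forall v : 'cV[C]_n, 0 <= (adjmx v *m A *m v) 0 0.

Definition density {n} (A : 'M[C]_n) : Prop := psd A /\ \tr A = 1.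

Definition sigz : 'M[C]_2 := \matrix_(i, j) (if i == j then (if i == 0 then 1 else -1) else 0).

(* Operators on H (x) H^*, with basis index mxtens_index (i, j) = 2 i + j,
   i.e. e_1(x)e_1^*, e_1(x)e_2^*, e_2(x)e_1^*, e_2(x)e_2^*. *)
Definition ptr2 (P : 'M[C]_(2 * 2)) : 'M[C]_2 :=
  \matrix_(i, k) \sum_(j < 2) P (mxtens_index (i, j)) (mxtens_index (k, j)).
Definition ptr1 (P : 'M[C]_(2 * 2)) : 'M[C]_2 :=
  \matrix_(j, l) \sum_(i < 2) P (mxtens_index (i, j)) (mxtens_index (i, l)).

Definition coupling (rho omega : 'M[C]_2) (P : 'M[C]_(2 * 2)) : Prop :=
  density P /\ ptr2 P = omega /\ ptr1 P = rho^T.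

Definition Cz2 : 'M[C]_(2 * 2) :=
  let X := sigz *t (1%:M)^T - (1%:M : 'M[C]_2) *t sigz^T in X *m X.

(* D^2_{z,2}(rho, omega) = min over couplings of tr[Pi C_{z,2}]
   (tr[Pi C] is real for Hermitian Pi; we take its real part to land in R) *)
Definition D2 (rho omega : 'M[C]_2) : R :=
  inf [set x : R | exists P, coupling rho omega P /\ x = @complex.Re R (\tr (P *m Cz2))].

Definition d2 (rho omega : 'M[C]_2) : R :=
  D2 rho omega - (D2 rho rho + D2 omega omega) / 2.

End Qubit.

From HB Require Import structures.
From mathcomp Require Import all_boot all_order all_algebra.
From mathcomp Require Import complex mxtens.
From mathcomp Require Import classical_sets reals.
From mathcomp Require Import ring lra.
Set Implicit Arguments. Unset Strict Implicit. Unset Printing Implicit Defensive.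
Import Order.TTheory GRing.Theory Num.Theory.
Local Open Scope ring_scope.
Local Open Scope complex_scope.

(* A state orthogonal to sigma_z is [herm2 (1/2) r] with [4 |r|^2 <= 1].  A coupling
   of two such states with off-diagonal entries r and w has diagonal
   (1/2 - b, b, b, 1/2 - b) and cost 8 b, and its 2x2 principal minors force
   max(|r|^2, |w|^2) <= 4 (1/2 - b) b.  Conversely every such b is attained, by the
   congruence diag(sqrt d) ([herm2 1 beta] (x) [herm2 1 alpha]) diag(sqrt d) of a
   tensor product of two positive correlation matrices.  Hence
   D^2 = g (max(|r|^2, |w|^2)) with g M = 2 - sqrt (4 - 16 M) nondecreasing, and the
   triangle inequality for d^2 reduces to g (max a c) + g b <= g (max a b) + g (max b c). *)


Section SquaredModulus.
Variable R : rcfType.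
Local Notation C := R[i].

Definition sqnorm (z : C) : R := complex.Re z ^+ 2 + complex.Im z ^+ 2.

Lemma sqnorm_ge0 z : 0 <= sqnorm z.
Proof. by rewrite addr_ge0 ?sqr_ge0. Qed.

Lemma sqnormJ z : sqnorm z^* = sqnorm z.
Proof. by case: z => x y; rewrite /sqnorm /= sqrrN. Qed.

Lemma sqnormD_le u v : sqnorm (u + v) <= 2 * (sqnorm u + sqnorm v).
Proof.
case: u v => x y [x' y']; rewrite /sqnorm /=.
have := sqr_ge0 (x - x'); have := sqr_ge0 (y - y'); lra.
Qed.

Lemma sqnorm_eq0 z : sqnorm z = 0 -> z = 0.
Proof.
case: z => x y; rewrite /sqnorm /= => /eqP; rewrite paddr_eq0 ?sqr_ge0 // !sqrf_eq0.
by case/andP => /eqP -> /eqP ->.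
Qed.

Lemma sqnorm_realM (x : R) z : sqnorm (x%:C * z) = x ^+ 2 * sqnorm z.
Proof. by case: z => u v; rewrite /sqnorm /=; simpc; rewrite /=; ring. Qed.

Lemma conjc_realC (x : R) : (x%:C)^* = x%:C.
Proof. by rewrite /= oppr0. Qed.

Lemma conjc_realM (x : R) z : (x%:C * z)^* = x%:C * z^*.
Proof. by case: z => u v; simpc. Qed.

Lemma realC_mulKV (s : R) z : sqnorm z <= s ^+ 2 -> s%:C * ((s^-1)%:C * z) = z.
Proof.
have [-> | s0] := eqVneq s 0.
  rewrite expr0n /= => z0.
  have -> : z = 0 by apply: sqnorm_eq0; apply: le_anti; rewrite z0 sqnorm_ge0.
  by rewrite !mulr0.
by rewrite mulrA -rmorphM divff // mul1r.
Qed.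

Lemma sqnorm_realVM_le1 (s : R) z : sqnorm z <= s ^+ 2 -> sqnorm ((s^-1)%:C * z) <= 1.
Proof.
rewrite sqnorm_realM; have [-> | s0] := eqVneq s 0; first by rewrite invr0 expr0n mul0r.
by rewrite exprVn mulrC ler_pdivrMr ?mul1r // lt_def sqr_ge0 expf_neq0.
Qed.

End SquaredModulus.

Lemma quadratic_ge0_le (R : realFieldType) (a d N : R) : 0 <= a -> 0 <= d -> 0 <= N ->
  (forall t, 0 <= a * t ^+ 2 - 2 * N * t + N * d) -> N <= a * d.
Proof.
move=> a0 d0 N0 q0; have [a_eq0|aN0] := eqVneq a 0.
  by have := q0 (d + 1); have := mulr_ge0 N0 d0; rewrite a_eq0; lra.
have ap : 0 < a by rewrite lt_def aN0 a0.
have [->|NN0] := eqVneq N 0; first by rewrite mulr_ge0.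
have Np : 0 < N / a by rewrite divr_gt0 // lt_def NN0 N0.
have := q0 (N / a).
have -> : a * (N / a) ^+ 2 - 2 * N * (N / a) + N * d = N / a * (a * d - N) by field.
by rewrite pmulr_rge0 // subr_ge0.
Qed.

Section PositiveSemidefinite.
Variable R : realType.
Local Notation C := R[i].

Lemma adjmxM m n p (A : 'M[C]_(m, n)) (B : 'M[C]_(n, p)) :
  adjmx (A *m B) = adjmx B *m adjmx A.
Proof. by rewrite /adjmx map_mxM trmx_mul. Qed.

Lemma adjmxK m n (A : 'M[C]_(m, n)) : adjmx (adjmx A) = A.
Proof. by apply/matrixP => i j; rewrite !mxE conjcK. Qed.

Lemma adjmx_tens m n p q (A : 'M[C]_(m, n)) (B : 'M[C]_(p, q)) :
  adjmx (A *t B) = adjmx A *t adjmx B.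
Proof. by rewrite /adjmx map_mxT trmx_tens. Qed.

Lemma adjmx_diag_real n (f : 'I_n -> R) :
  adjmx (diag_mx (\row_i (f i)%:C)) = diag_mx (\row_i (f i)%:C).
Proof.
apply/matrixP => i j; rewrite !mxE eq_sym.
by case: eqP => [->|_]; rewrite ?mulr1n ?mulr0n ?conjc_realC.
Qed.

Lemma psd_gram m n (U : 'M[C]_(m, n)) : psd (U *m adjmx U).
Proof.
move=> v; rewrite mulmxA -mulmxA.
have -> : adjmx v *m U = adjmx (adjmx U *m v) by rewrite adjmxM adjmxK.
rewrite mxE sumr_ge0 // => k _.
by rewrite !mxE mulrC mulcJ_ge0.
Qed.

Lemma delta_form n (A : 'M[C]_n) k l :
  (delta_mx 0 k : 'rV[C]_n) *m A *m (delta_mx l 0 : 'cV[C]_n) = (A k l)%:M.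
Proof. by rewrite [LHS]mx11_scalar -rowE -colE !mxE. Qed.

Variables (n : nat) (A : 'M[C]_n).
Hypothesis psdA : psd A.

Lemma psd_form2 k l p q :
  0 <= p^* * p * A k k + p^* * q * A k l + q^* * p * A l k + q^* * q * A l l.
Proof.
set v : 'cV[C]_n := p *: delta_mx k 0 + q *: delta_mx l 0.
have adj_v : adjmx v = p^* *: delta_mx 0 k + q^* *: delta_mx 0 l.
  by apply/matrixP => i j; rewrite !mxE rmorphD !rmorphM (ord1 i) eqxx !andbT !rmorph_nat.
move: (psdA v); rewrite adj_v /v !mulmxDl !mulmxDr -!scalemxAl -!scalemxAr.
by rewrite !delta_form !mxE eqxx !mulr1n; congr (_ <= _); ring.
Qed.

Lemma psd_diag_ge0 k : 0 <= A k k.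
Proof.
by have := psd_form2 k k 1 0; rewrite rmorph1 raddf0 !(mul0r, mulr0, mul1r, addr0).
Qed.

Lemma psd_diag_real k : A k k = (complex.Re (A k k))%:C.
Proof. by have := psd_diag_ge0 k; case: (A k k) => x y; rewrite lecE /= => /andP[/eqP ->]. Qed.

Lemma psd_diag_Re_ge0 k : 0 <= complex.Re (A k k).
Proof. by have := psd_diag_ge0 k; rewrite lecE => /andP[]. Qed.

Lemma psd_hermitian k l : A l k = (A k l)^*.
Proof.
have := psd_form2 k l 1 1; have := psd_form2 k l 1 'i.
rewrite (psd_diag_real k) (psd_diag_real l).
move: (complex.Re _) (complex.Re _) (A k l) (A l k) => d1 d2 [x1 y1] [x2 y2].
simpc => /andP[/eqP e1 _] /andP[/eqP e2 _]; congr (_ +i* _); lra.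
Qed.

(* Test vector [t e_k - (A k l)^* e_l]: its quadratic form is
   [Re A_kk t^2 - 2 |A k l|^2 t + |A k l|^2 Re A_ll]. *)
Lemma psd_minor k l : sqnorm (A k l) <= complex.Re (A k k) * complex.Re (A l l).
Proof.
apply: quadratic_ge0_le; rewrite ?psd_diag_Re_ge0 ?sqnorm_ge0 // => t.
have := psd_form2 k l t%:C (- (A k l)^*).
rewrite (psd_hermitian k l) (psd_diag_real k) (psd_diag_real l) /sqnorm.
move: (complex.Re _) (complex.Re _) (A k l) => a d [x y].
simpc => /andP[_]; rewrite /=; lra.
Qed.

End PositiveSemidefinite.

Lemma ord2P (i : 'I_2) : i = 0 \/ i = 1.
Proof. by case: i => [[|[|//]]] ?; [left | right]; apply: val_inj. Qed.

Lemma sum_ord2 (V : nmodType) (F : 'I_2 -> V) : \sum_i F i = F 0 + F 1.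
Proof. by rewrite big_ord_recl big_ord1; congr (_ + F _); apply: val_inj. Qed.

Lemma sum_mxtens_index (V : nmodType) m n (F : 'I_(m * n) -> V) :
  \sum_K F K = \sum_i \sum_j F (mxtens_index (i, j)).
Proof.
rewrite (reindex (@mxtens_index m n)); last first.
  by exists (@mxtens_unindex m n) => x _; rewrite ?mxtens_indexK ?mxtens_unindexK.
by rewrite pair_bigA; apply: eq_bigr => -[].
Qed.

Section Qubit.
Variable R : realType.
Local Notation C := R[i].
Local Notation ix i j := (@mxtens_index 2 2 (i, j)).

Lemma half_real : (2^-1 : C) = (2^-1 : R)%:C.
Proof. by rewrite fmorphV rmorph_nat. Qed.

Definition herm2 (d c : C) : 'M[C]_2 :=
  \matrix_(i, j) if i == j then d else if i == 0 then c else c^*.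

Lemma trmx_herm2 d c : (herm2 d c)^T = herm2 d c^*.
Proof.
apply/matrixP => i j; rewrite !mxE eq_sym.
by case: (ord2P i) => ->; case: (ord2P j) => ->; rewrite ?conjcK.
Qed.

Lemma equatorial_state (rho : 'M[C]_2) : density rho -> \tr (rho *m sigz R) = 0 ->
  exists2 r, rho = herm2 2^-1 r & 4 * sqnorm r <= 1.
Proof.
move=> [psd_rho tr1]; rewrite /mxtrace !sum_ord2 !mxE !sum_ord2 !mxE /= => trz.
move: tr1; rewrite /mxtrace sum_ord2 => tr1.
have r00_r11 : rho 0 0 = rho 1 1 by apply/eqP; rewrite -subr_eq0 -trz; apply/eqP; ring.
have rho00 : rho 0 0 = 2^-1.
  have -> : rho 0 0 = (rho 0 0 + rho 1 1) / 2 by rewrite -r00_r11; field.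
  by rewrite tr1 mul1r.
have rho11 : rho 1 1 = 2^-1 by rewrite -r00_r11.
exists (rho 0 1).
  apply/matrixP => i j; rewrite !mxE.
  case: (ord2P i) => ->; case: (ord2P j) => ->; rewrite //= -?psd_hermitian //.
by have := psd_minor psd_rho 0 1; rewrite rho00 rho11 half_real /=; lra.
Qed.

Lemma tr_mul_Cz2 (P : 'M[C]_(2 * 2)) :
  \tr (P *m Cz2 R) = 4 * (P (ix 0 1) (ix 0 1) + P (ix 1 0) (ix 1 0)).
Proof.
rewrite /mxtrace sum_mxtens_index !sum_ord2 !mxE !sum_mxtens_index !sum_ord2.
rewrite /Cz2 !mxE !sum_mxtens_index !sum_ord2 !mxE !mxtens_indexK /=.
ring.
Qed.

Lemma ptr2E (P : 'M[C]_(2 * 2)) i k :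
  ptr2 P i k = P (ix i 0) (ix k 0) + P (ix i 1) (ix k 1).
Proof. by rewrite mxE sum_ord2. Qed.

Lemma ptr1E (P : 'M[C]_(2 * 2)) j l :
  ptr1 P j l = P (ix 0 j) (ix 0 l) + P (ix 1 j) (ix 1 l).
Proof. by rewrite mxE sum_ord2. Qed.

Lemma coupling_diag (r w : C) (P : 'M[C]_(2 * 2)) :
  coupling (herm2 2^-1 r) (herm2 2^-1 w) P ->
  let b := complex.Re (P (ix 0 1) (ix 0 1)) in
  [/\ complex.Re (P (ix 0 0) (ix 0 0)) = 2^-1 - b, complex.Re (P (ix 1 0) (ix 1 0)) = b
    & complex.Re (P (ix 1 1) (ix 1 1)) = 2^-1 - b].
Proof.
move=> [[psdP _] [marg2 marg1]] b.
have := ptr2E P 0 0; have := ptr2E P 1 1; have := ptr1E P 0 0.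
rewrite marg2 marg1 !mxE /=.
rewrite (psd_diag_real psdP (ix 0 0)) (psd_diag_real psdP (ix 0 1)).
rewrite (psd_diag_real psdP (ix 1 0)) (psd_diag_real psdP (ix 1 1)) -/b.
rewrite -!rmorphD half_real => /complexI f00 /complexI e11 /complexI e00.
by split; lra.
Qed.

Lemma coupling_cost_bound (r w : C) (P : 'M[C]_(2 * 2)) :
  coupling (herm2 2^-1 r) (herm2 2^-1 w) P ->
  let b := complex.Re (P (ix 0 1) (ix 0 1)) in
  [/\ 0 <= b, Num.max (sqnorm r) (sqnorm w) <= 4 * (2^-1 - b) * b
    & complex.Re (\tr (P *m Cz2 R)) = 8 * b].
Proof.
move=> cP b; have [p00E p10E p11E] := coupling_diag cP.
case: cP => [[psdP _] [marg2 marg1]]; rewrite trmx_herm2 in marg1.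
have := ptr2E P 0 1; have := ptr1E P 0 1; rewrite marg2 marg1 !mxE /= => fr ew.
have nw := sqnormD_le (P (ix 0 0) (ix 1 0)) (P (ix 0 1) (ix 1 1)).
have nr := sqnormD_le (P (ix 0 0) (ix 0 1)) (P (ix 1 0) (ix 1 1)).
rewrite -ew in nw; rewrite -fr sqnormJ in nr.
have m1 := psd_minor psdP (ix 0 0) (ix 1 0); have m2 := psd_minor psdP (ix 0 1) (ix 1 1).
have m3 := psd_minor psdP (ix 0 0) (ix 0 1); have m4 := psd_minor psdP (ix 1 0) (ix 1 1).
rewrite -/b p00E p10E p11E in m1 m2 m3 m4.
split; first exact: psd_diag_Re_ge0.
  by rewrite ge_max; apply/andP; split; lra.
rewrite tr_mul_Cz2 (psd_diag_real psdP (ix 0 1)) (psd_diag_real psdP (ix 1 0)) /=.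
by rewrite p10E -/b; lra.
Qed.

Definition gram2 (c : C) : 'M[C]_2 :=
  \matrix_(i, j) if j == 0 then (if i == 0 then 1 else c^*)
                 else if i == 0 then 0 else (Num.sqrt (1 - sqnorm c))%:C.

Lemma gram2_mul_adj c : sqnorm c <= 1 -> gram2 c *m adjmx (gram2 c) = herm2 1 c.
Proof.
move=> c_le1; have t2 : Num.sqrt (1 - sqnorm c) ^+ 2 = 1 - sqnorm c by rewrite sqr_sqrtr // subr_ge0.
apply/matrixP => i k; rewrite !mxE sum_ord2 !mxE /=.
move: c_le1 t2; rewrite /sqnorm; case: c => x y /= _.
set t := Num.sqrt _ => t2.
case: (ord2P i) => ->; case: (ord2P k) => -> /=; simpc => //.
by rewrite -!expr2 t2 addrC subrK mulrC subrr.
Qed.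

Section Witness.
Variables (r w : C) (b : R).
Hypotheses (b_ge0 : 0 <= b) (b_le_half : b <= 2^-1).
Hypotheses (r_le : sqnorm r <= 4 * (2^-1 - b) * b) (w_le : sqnorm w <= 4 * (2^-1 - b) * b).

Let sa := Num.sqrt (2^-1 - b).
Let sb := Num.sqrt b.
Let s := 2 * sa * sb.
Let weight (i j : 'I_2) : R := if i == j then sa else sb.

(* [V *m adjmx V] is the congruence by [D] of a tensor product of correlation matrices
   [herm2 1 c = gram2 c *m adjmx (gram2 c)]; when [s = 0] the hypotheses force
   [r = w = 0], so the junk value [0^-1 = 0] is harmless. *)
Definition coupling_witness : 'M[C]_(2 * 2) :=
  let D := diag_mx (\row_K (weight (mxtens_unindex K).1 (mxtens_unindex K).2)%:C) in
  let V := D *m (gram2 ((s^-1)%:C * w) *t gram2 ((s^-1)%:C * r^*)) in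
  V *m adjmx V.

Lemma sa_sqr : sa * sa = 2^-1 - b.
Proof. by rewrite -expr2 sqr_sqrtr // subr_ge0. Qed.

Lemma sb_sqr : sb * sb = b.
Proof. by rewrite -expr2 sqr_sqrtr. Qed.

Lemma s_sqr : s ^+ 2 = 4 * (2^-1 - b) * b.
Proof. by rewrite /s -sa_sqr -sb_sqr; ring. Qed.

Lemma weights_sqr : ((sa * sa)%:C + (sb * sb)%:C : C) = 2^-1.
Proof. by rewrite -rmorphD sa_sqr sb_sqr subrK half_real. Qed.

Lemma weights_scale z : sqnorm z <= 4 * (2^-1 - b) * b ->
  (sa * sb)%:C * ((s^-1)%:C * z) + (sb * sa)%:C * ((s^-1)%:C * z) = z.
Proof.
move=> z_le; rewrite -mulrDl -rmorphD (_ : sa * sb + sb * sa = s) /s; last by ring.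
by rewrite realC_mulKV // -/s s_sqr.
Qed.

Lemma coupling_witnessE i j k l :
  coupling_witness (ix i j) (ix k l) =
  (weight i j * weight k l)%:C * herm2 1 ((s^-1)%:C * w) i k * herm2 1 ((s^-1)%:C * r^*) j l.
Proof.
rewrite /coupling_witness !adjmxM adjmx_tens adjmx_diag_real mulmxA -(mulmxA (diag_mx _)).
rewrite tensmx_mul !gram2_mul_adj ?sqnorm_realVM_le1 ?sqnormJ ?s_sqr //.
rewrite mul_mx_diag mxE mul_diag_mx mxE tensmxE !mxE !mxtens_indexK rmorphM /=; ring.
Qed.

Lemma coupling_witness_cost : complex.Re (\tr (coupling_witness *m Cz2 R)) = 8 * b.
Proof.
by rewrite tr_mul_Cz2 !coupling_witnessE /weight !mxE /= sb_sqr; lra.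
Qed.

Lemma coupling_witnessP : coupling (herm2 2^-1 r) (herm2 2^-1 w) coupling_witness.
Proof.
split; [split; [exact: psd_gram | ] | split].
- rewrite /mxtrace sum_mxtens_index !sum_ord2 !coupling_witnessE /weight !mxE /= !mulr1.
  by rewrite [(sb * sb)%:C + _]addrC weights_sqr; field.
- apply/matrixP => i k; rewrite ptr2E !coupling_witnessE /weight !mxE.
  case: (ord2P i) => ->; case: (ord2P k) => -> /=; rewrite !mulr1.
  + exact: weights_sqr.
  + exact: weights_scale.
  + by rewrite conjc_realM addrC weights_scale ?sqnormJ.
  + by rewrite addrC weights_sqr.
apply/matrixP => j l; rewrite trmx_herm2 ptr1E !coupling_witnessE /weight !mxE.
case: (ord2P j) => ->; case: (ord2P l) => -> /=; rewrite !mulr1.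
+ exact: weights_sqr.
+ by rewrite weights_scale ?sqnormJ.
+ by rewrite conjc_realM addrC weights_scale ?sqnormJ.
+ by rewrite addrC weights_sqr.
Qed.

End Witness.

End Qubit.

Lemma inf_attained (R : realType) (E : set R) x : E x -> lbound E x -> inf E = x.
Proof.
move=> Ex lbx; apply/eqP; rewrite eq_le lb_le_inf ?andbT //; last by exists x.
exact: (ge_inf (ex_intro _ x lbx)).
Qed.

Lemma max_triangle (R : realDomainType) (f : R -> R) x y z :
  {homo f : u v / u <= v} ->
  f (Num.max x z) + f y <= f (Num.max x y) + f (Num.max y z).
Proof.
move=> f_nd; have [zx|xz] := leP z x.
  by rewrite lerD // f_nd // le_max lexx.
by rewrite addrC lerD // f_nd // le_max lexx ?orbT.
Qed.

Section OptimalCost.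
Variable R : rcfType.

Definition optcost (M : R) : R := 2 - Num.sqrt (4 - 16 * M).

Lemma optcost_nondecr : {homo optcost : M M' / M <= M'}.
Proof. by move=> M M' le_MM'; rewrite lerD2l lerN2 ler_wsqrtr // lerD2l lerN2 ler_pM2l. Qed.

Lemma optcost_le M b : 0 <= b -> M <= 4 * (2^-1 - b) * b -> optcost M <= 8 * b.
Proof.
move=> b_ge0 M_le; rewrite /optcost lerBlDr -lerBlDl.
apply: le_trans (ler_norm _) _; rewrite -sqrtr_sqr ler_wsqrtr //; nra.
Qed.

Lemma optcost_feasible M : 0 <= M -> 4 * M <= 1 ->
  let b := optcost M / 8 in [/\ 0 <= b, b <= 2^-1 & M <= 4 * (2^-1 - b) * b].
Proof.
move=> M_ge0 M_le b; have S_ge0 := sqrtr_ge0 (4 - 16 * M).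
have S_sqr : Num.sqrt (4 - 16 * M) ^+ 2 = 4 - 16 * M by rewrite sqr_sqrtr //; lra.
rewrite /b /optcost; split; nra.
Qed.

End OptimalCost.

Lemma D2_herm2 (R : realType) (r w : R[i]) : 4 * sqnorm r <= 1 -> 4 * sqnorm w <= 1 ->
  D2 (herm2 2^-1 r) (herm2 2^-1 w) = optcost (Num.max (sqnorm r) (sqnorm w)).
Proof.
move=> r_le w_le; set M := Num.max _ _.
have M_ge0 : 0 <= M by rewrite le_max sqnorm_ge0.
have M_le : 4 * M <= 1 by rewrite /M; case: (leP (sqnorm r) (sqnorm w)).
have [b_ge0 b_le rw_le] := optcost_feasible M_ge0 M_le.
move: rw_le; rewrite ge_max => /andP[r_le' w_le'].
apply: inf_attained.
  exists (coupling_witness r w (optcost M / 8)); split; first exact: coupling_witnessP.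
  by rewrite coupling_witness_cost // mulrC divfK // pnatr_eq0.
move=> _ [P [cP ->]]; have [b_ge0' M_le' ->] := coupling_cost_bound cP.
exact: optcost_le.
Qed.

Unset Implicit Arguments.

Theorem proposition3p8 (R : realType) (rho sigma omega : 'M[R[i]]_2) :
  density rho -> density sigma -> density omega ->
  \tr (rho *m sigz R) = 0 -> \tr (sigma *m sigz R) = 0 -> \tr (omega *m sigz R) = 0 ->
  d2 rho omega <= d2 rho sigma + d2 sigma omega.
Proof.
move=> /equatorial_state rho_eq /equatorial_state sigma_eq /equatorial_state omega_eq.
move=> /rho_eq[r -> r_le] /sigma_eq[s -> s_le] /omega_eq[w -> w_le].
rewrite /d2 !D2_herm2 // !maxxx.
have := max_triangle (sqnorm r) (sqnorm s) (sqnorm w) (@optcost_nondecr R).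
lra.
Qed.
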